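(* Let $F$ be a field of characteristic $2$ with subfield of squares $F^2$. The map $F\times F\to W_{ssq}(F)$, $(\alpha,\alpha')\mapsto$ Witt class of $\langle\alpha\,|\,\alpha'\rangle$, induces a well-defined group homomorphism $$\Phi\colon F\otimes_{F^2}F\to W_{ssq}(F),\qquad \alpha\otimes\alpha'\mapsto\langle\alpha\,|\,\alpha'\rangle,$$ and $\Phi$ is an isomorphism of groups.
   Context: Let $F$ be a field of characteristic $2$. A separated symplectic quadratic space over $F$ is a triple $(V,q,q')$ where $V$ is a finite-dimensional $F$-vector space, $q$ is a totally singular quadratic form on $V$ and $q'$ is a totally singular quadratic form on the dual space $V^*$ (a quadratic form $Q$ is totally singular if $Q(x+y)=Q(x)+Q(y)$ for all $x,y$). Two such spaces $(V_1,q_1,q_1')$, $(V_2,q_2,q_2')$ are isometric if there is a linear isomorphism $L\colon V_1\to V_2$ with $q_2\circ L=q_1$ and $q_1'\circ L^*=q_2'$ ($L^*$ the dual map). Orthogonal sum: $(V_1\oplus V_2,q_1\perp q_2,q_1'\perp q_2')$ using $(V_1\oplus V_2)^*=V_1^*\oplus V_2^*$. For a subspace $U\subset V$, $U^{o}=\{\varphi\in V^*:\varphi(U)=0\}$. The space is metabolic if there exists a subspace $U\subset V$ (of any dimension) with $q(U)=\{0\}$ and $q'(U^o)=\{0\}$. $W_{ssq}(F)$ is the Witt group of separated symplectic quadratic spaces: isometry classes modulo $\varphi\sim\psi$ iff $\varphi\perp\mu\simeq\psi\perp\mu'$ for metabolic $\mu,\mu'$, with operation induced by orthogonal sum. For $\alpha,\alpha'\in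 F$, $\langle\alpha\,|\,\alpha'\rangle$ is the one-dimensional space $(F,q,q')$ with $q(1)=\alpha$ and $q'(1^* )=\alpha'$, where $1^*$ is the dual basis vector of $1$. *)

From HB Require Import structures.
From mathcomp Require Import all_boot all_order all_algebra.
Set Implicit Arguments. Unset Strict Implicit. Unset Printing Implicit Defensive.
Import Order.TTheory GRing.Theory Num.Theory.
Local Open Scope ring_scope.

Section SSQ.
Variable F : fieldType.

Definition polar {n} (q : 'rV[F]_n -> F) (x y : 'rV[F]_n) : F :=
  q (x + y) - q x - q y.

Definition qform {n} (q : 'rV[F]_n -> F) : Prop :=
  (forall c x, q (c *: x) = c ^+ 2 * q x) /\
  (forall x y z, polar q (x + y) z = polar q x z + polar q y z) /\
  (forall x y z, polar q x (y + z) = polar q x y + polar q x z) /\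
  (forall c x y, polar q (c *: x) y = c * polar q x y) /\
  (forall c x y, polar q x (c *: y) = c * polar q x y).

Definition ts_qform {n} (q : 'rV[F]_n -> F) : Prop :=
  qform q /\ (forall x y, q (x + y) = q x + q y).

(* ---------- separated symplectic quadratic spaces ----------
   V = F^n (row vectors); the dual V^* is identified with F^n through the
   standard pairing  phi(v) = v *m phi^T.  ssq_q is q on V, ssq_qd is q' on V^*. *)
Record ssq := SSQ {
  ssq_dim : nat;
  ssq_q : 'rV[F]_ssq_dim -> F;
  ssq_qd : 'rV[F]_ssq_dim -> F }.
Arguments ssq_q s _ : clear implicits.
Arguments ssq_qd s _ : clear implicits.

Definition valid (V : ssq) : Prop := ts_qform (ssq_q V) /\ ts_qform (ssq_qd V).

(* isometry: L(x) = x *m M, L bijective; dual map L^*(y) = y *m M^T *)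
Definition isometric (V W : ssq) : Prop :=
  exists M : 'M[F]_(ssq_dim V, ssq_dim W),
    [/\ row_free M, row_full M,
        (forall x, ssq_q W (x *m M) = ssq_q V x) &
        (forall y, ssq_qd V (y *m M^T) = ssq_qd W y)].

Definition osum (V W : ssq) : ssq :=
  @SSQ (ssq_dim V + ssq_dim W)
    (fun x => ssq_q V (lsubmx x) + ssq_q W (rsubmx x))
    (fun y => ssq_qd V (lsubmx y) + ssq_qd W (rsubmx y)).

(* metabolic: some subspace U (row space of a matrix) with q(U) = 0 and
   q'(U^o) = 0, U^o = {phi | phi(U) = 0} *)
Definition metabolic (V : ssq) : Prop :=
  exists U : 'M[F]_(ssq_dim V),
    (forall u : 'rV[F]_(ssq_dim V), (u <= U)%MS -> ssq_q V u = 0) /\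
    (forall phi : 'rV[F]_(ssq_dim V),
        (forall u : 'rV[F]_(ssq_dim V), (u <= U)%MS -> u *m phi^T = 0) ->
        ssq_qd V phi = 0).

Definition witt_equiv (V W : ssq) : Prop :=
  exists mu mu' : ssq,
    [/\ valid mu, valid mu', metabolic mu, metabolic mu' &
        isometric (osum V mu) (osum W mu')].

Definition one_dim (a a' : F) : ssq :=
  @SSQ 1 (fun x => a * (x 0 0) ^+ 2) (fun y => a' * (y 0 0) ^+ 2).

Definition zero_ssq : ssq := @SSQ 0 (fun _ => 0) (fun _ => 0).

(* ---------- the tensor product F (x)_{F^2} F ----------
   Free abelian group on F x F: formal Z-combinations, compared by coefficients. *)
Definition fsum := seq (int * (F * F)).
Definition fcoef (s : fsum) (p : F * F) : int := \sum_(x <- s | x.2 == p) x.1.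

Inductive tensor_relator : fsum -> Prop :=
| rel_addl a b c :
    tensor_relator [:: (1%:Z, (a + b, c)); (-1, (a, c)); (-1, (b, c))]
| rel_addr a b c :
    tensor_relator [:: (1%:Z, (a, b + c)); (-1, (a, b)); (-1, (a, c))]
| rel_sq x a b :
    tensor_relator [:: (1%:Z, (x ^+ 2 * a, b)); (-1, (a, x ^+ 2 * b))].

Definition tensor_zero (s : fsum) : Prop :=
  exists rs : seq (int * fsum),
    (forall r, r \in rs -> tensor_relator r.2) /\
    forall p, fcoef s p = \sum_(r <- rs) r.1 * fcoef r.2 p.

(* an element of F (x) F represented as a sum of pure tensors
   sum_i a_i (x) a'_i ; two such sums are equal in F (x)_{F^2} F *)
Definition tens_eq (s t : seq (F * F)) : Prop :=
  tensor_zero ([seq (1%:Z, x) | x <- s] ++ [seq (-1, x) | x <- t]).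

Definition Phi (s : seq (F * F)) : ssq :=
  foldr (fun x acc => osum (one_dim x.1 x.2) acc) zero_ssq s.

End SSQ.

From HB Require Import structures.
From mathcomp Require Import all_boot all_order all_algebra all_fingroup.
From mathcomp Require Import zify ring.
Import GRing.Theory.
Local Open Scope ring_scope.
Set Implicit Arguments. Unset Strict Implicit.

(* The inverse of Phi is the diagonal invariant: a space with basis (e_i) and
   dual basis (e_i^* ) goes to sum_i q(e_i) (x) q'(e_i^* ).  Since q and q' are
   additive and scale by squares, a change of basis only uses bilinearity, the
   relation c^2 a (x) b = a (x) c^2 b, and the additivity of squaring in
   characteristic 2, so the invariant is preserved by isometries.  In a basis of
   U extended by a basis of a complement, where U witnesses that a space is
   metabolic, every term has a vanishing factor, so the invariant is defined on
   W_ssq(F) and Phi is injective.  Conversely Phi sends every defining relator of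
   F (x)_{F^2} F, and every <a|a'> _|_ <a|a'>, to a metabolic space; reducing a
   relation modulo 2 shows that these blocks make Phi s and Phi t Witt
   equivalent.  Every space is diagonal in the standard basis, so Phi is onto. *)

Section TensorRelations.
Variable F : fieldType.
Implicit Types (f g h : F * F -> int) (a b c : F) (s t : seq (F * F)).

(* Elements of the free abelian group on F x F are coefficient functions;
   [tensor_eqv f g] is equality of their images in F (x)_{F^2} F. *)
Definition tensor_null f := exists rs : seq (int * fsum F),
  (forall r, r \in rs -> tensor_relator r.2) /\
  forall p, f p = \sum_(r <- rs) r.1 * fcoef r.2 p.

Definition tensor_eqv f g := tensor_null (fun p => f p - g p).

Definition tensor a b : F * F -> int := fun p => ((a, b) == p)%:Z.

Definition tensor_seq s : F * F -> int := fun p => (count_mem p s)%:Z.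

Lemma tensor_null_ext f g : f =1 g -> tensor_null f -> tensor_null g.
Proof. by move=> fg [rs [rel_rs f_rs]]; exists rs; split=> // p; rewrite -fg. Qed.

Lemma tensor_null0 : tensor_null (fun _ => 0).
Proof. by exists [::]; split=> // p; rewrite big_nil. Qed.

Lemma tensor_nullD f g :
  tensor_null f -> tensor_null g -> tensor_null (fun p => f p + g p).
Proof.
move=> [rs [rel_rs f_rs]] [rs' [rel_rs' g_rs']]; exists (rs ++ rs'); split.
  by move=> r; rewrite mem_cat => /orP[/rel_rs|/rel_rs'].
by move=> p; rewrite big_cat /= f_rs g_rs'.
Qed.

Lemma tensor_nullN f : tensor_null f -> tensor_null (fun p => - f p).
Proof.
move=> [rs [rel_rs f_rs]]; exists [seq (- r.1, r.2) | r <- rs]; split.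
  by move=> r /mapP[r' /rel_rs ? ->].
by move=> p; rewrite big_map f_rs -sumrN; apply: eq_bigr => r _; rewrite mulNr.
Qed.

Lemma tensor_null_relator r : tensor_relator r -> tensor_null (fcoef r).
Proof.
move=> rel_r; exists [:: (1, r)]; split; first by move=> r'; rewrite inE => /eqP->.
by move=> p; rewrite big_seq1 mul1r.
Qed.

Lemma tensor_eqv_ext f g : f =1 g -> tensor_eqv f g.
Proof. by move=> fg; apply: tensor_null_ext tensor_null0 => p; rewrite fg subrr. Qed.

Lemma tensor_eqv_refl f : tensor_eqv f f.
Proof. exact: tensor_eqv_ext. Qed.

Lemma tensor_eqv_sym f g : tensor_eqv f g -> tensor_eqv g f.
Proof. by move/tensor_nullN; apply: tensor_null_ext => p; rewrite opprB. Qed.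

Lemma tensor_eqv_trans f g h :
  tensor_eqv f g -> tensor_eqv g h -> tensor_eqv f h.
Proof.
by move=> fg gh; apply: tensor_null_ext (tensor_nullD fg gh) => p; rewrite addrA subrK.
Qed.

Lemma tensor_eqvD f1 f2 g1 g2 : tensor_eqv f1 g1 -> tensor_eqv f2 g2 ->
  tensor_eqv (fun p => f1 p + f2 p) (fun p => g1 p + g2 p).
Proof.
by move=> e1 e2; apply: tensor_null_ext (tensor_nullD e1 e2) => p; rewrite opprD addrACA.
Qed.

Lemma tensor_eqv_sum (I : Type) (r : seq I) (f g : I -> F * F -> int) :
  (forall i, tensor_eqv (f i) (g i)) ->
  tensor_eqv (fun p => \sum_(i <- r) f i p) (fun p => \sum_(i <- r) g i p).
Proof.
move=> fg; elim: r => [|i r IHr].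
  by apply: tensor_eqv_ext => p; rewrite !big_nil.
by apply: tensor_null_ext (tensor_eqvD (fg i) IHr) => p; rewrite !big_cons.
Qed.

Lemma tensor_seqE s p : tensor_seq s p = \sum_(x <- s) tensor x.1 x.2 p.
Proof.
rewrite /tensor_seq /tensor; elim: s => [|[a b] s IHs]; first by rewrite big_nil.
by rewrite big_cons /= PoszD IHs.
Qed.

Lemma tensor_seq_cat s t p : tensor_seq (s ++ t) p = tensor_seq s p + tensor_seq t p.
Proof. by rewrite /tensor_seq count_cat PoszD. Qed.

Lemma fcoef_signed s t p :
  fcoef ([seq (1%:Z, x) | x <- s] ++ [seq (-1, x) | x <- t]) p =
  tensor_seq s p - tensor_seq t p.
Proof.
rewrite /fcoef big_cat /= !big_map /tensor_seq; congr (_ + _).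
  elim: s => [|x s IHs]; first by rewrite big_nil.
  by rewrite big_cons /= IHs; case: (x == p) => //=; rewrite PoszD.
elim: t => [|x t IHt]; first by rewrite big_nil.
by rewrite big_cons /= IHt; case: (x == p) => //=; rewrite PoszD opprD.
Qed.

Lemma tens_eqE s t : tens_eq s t <-> tensor_eqv (tensor_seq s) (tensor_seq t).
Proof. by split; apply: tensor_null_ext => p; rewrite fcoef_signed. Qed.

Lemma tensorDl a b c :
  tensor_eqv (tensor (a + b) c) (fun p => tensor a c p + tensor b c p).
Proof.
apply: tensor_null_ext (tensor_null_relator (rel_addl a b c)) => p.
rewrite /fcoef !big_cons big_nil /tensor /=.
by case: (_ == p); case: (_ == p); case: (_ == p) => /=; lia.
Qed.

Lemma tensorDr a b c :
  tensor_eqv (tensor a (b + c)) (fun p => tensor a b p + tensor a c p).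
Proof.
apply: tensor_null_ext (tensor_null_relator (rel_addr a b c)) => p.
rewrite /fcoef !big_cons big_nil /tensor /=.
by case: (_ == p); case: (_ == p); case: (_ == p) => /=; lia.
Qed.

Lemma tensor_sq_swap x a b : tensor_eqv (tensor (x ^+ 2 * a) b) (tensor a (x ^+ 2 * b)).
Proof.
apply: tensor_null_ext (tensor_null_relator (rel_sq x a b)) => p.
rewrite /fcoef !big_cons big_nil /tensor /=.
by case: (_ == p); case: (_ == p) => /=; lia.
Qed.

Lemma tensor0l b : tensor_eqv (tensor 0 b) (fun _ => 0).
Proof.
have := tensorDl 0 0 b; rewrite addr0 => /tensor_nullN.
by apply: tensor_null_ext => p; lia.
Qed.

Lemma tensor0r a : tensor_eqv (tensor a 0) (fun _ => 0).
Proof.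
have := tensorDr a 0 0; rewrite addr0 => /tensor_nullN.
by apply: tensor_null_ext => p; lia.
Qed.

Lemma tensor_suml (I : Type) (r : seq I) (x : I -> F) c :
  tensor_eqv (tensor (\sum_(i <- r) x i) c) (fun p => \sum_(i <- r) tensor (x i) c p).
Proof.
elim: r => [|i r IHr].
  by rewrite big_nil; apply: tensor_null_ext (tensor0l c) => p; rewrite big_nil.
rewrite big_cons; apply: tensor_eqv_trans (tensorDl _ _ _) _.
by apply: tensor_null_ext (tensor_eqvD (tensor_eqv_refl _) IHr) => p; rewrite big_cons.
Qed.

Lemma tensor_sumr (I : Type) (r : seq I) a (y : I -> F) :
  tensor_eqv (tensor a (\sum_(i <- r) y i)) (fun p => \sum_(i <- r) tensor a (y i) p).
Proof.
elim: r => [|i r IHr].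
  by rewrite big_nil; apply: tensor_null_ext (tensor0r a) => p; rewrite big_nil.
rewrite big_cons; apply: tensor_eqv_trans (tensorDr _ _ _) _.
by apply: tensor_null_ext (tensor_eqvD (tensor_eqv_refl _) IHr) => p; rewrite big_cons.
Qed.

Lemma tensor_sum_sum (I J : Type) (r : seq I) (r' : seq J) (x : I -> F) (y : J -> F) :
  tensor_eqv (tensor (\sum_(i <- r) x i) (\sum_(j <- r') y j))
             (fun p => \sum_(i <- r) \sum_(j <- r') tensor (x i) (y j) p).
Proof.
apply: tensor_eqv_trans (tensor_suml _ _ _) _.
by apply: tensor_eqv_sum => i; apply: tensor_sumr.
Qed.

Hypothesis hF : 2%N \in [pchar F].

Lemma sqrD_pchar2 a b : (a + b) ^+ 2 = a ^+ 2 + b ^+ 2.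
Proof. by rewrite sqrrD mulr2n addrr_pchar2 // addr0. Qed.

Lemma sqr_sum_pchar2 (I : Type) (r : seq I) (x : I -> F) :
  (\sum_(i <- r) x i) ^+ 2 = \sum_(i <- r) x i ^+ 2.
Proof.
elim: r => [|i r IHr]; first by rewrite !big_nil expr0n.
by rewrite !big_cons sqrD_pchar2 IHr.
Qed.

Lemma sum_sqr_inverse m n (M : 'M[F]_(m, n)) (N : 'M[F]_(n, m)) (b : 'I_n -> F) j :
  N *m M = 1%:M -> \sum_(i < m) \sum_(k < n) M i j ^+ 2 * (N k i ^+ 2 * b k) = b j.
Proof.
move=> NM; rewrite exchange_big /=.
transitivity (\sum_(k < n) (N *m M) k j ^+ 2 * b k).
  apply: eq_bigr => k _; rewrite mxE sqr_sum_pchar2 mulr_suml.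
  by apply: eq_bigr => i _; rewrite exprMn mulrCA mulrA.
rewrite NM (bigD1 j) //= big1 => [|k /negbTE nkj]; rewrite mxE ?eqxx ?nkj.
  by rewrite expr1n mul1r addr0.
by rewrite expr0n mul0r.
Qed.

Lemma tensor_change_basis m n (M : 'M[F]_(m, n)) (N : 'M[F]_(n, m)) (a b : 'I_n -> F) :
  N *m M = 1%:M ->
  tensor_eqv
    (fun p => \sum_(i < m) tensor (\sum_(j < n) M i j ^+ 2 * a j) (\sum_(k < n) N k i ^+ 2 * b k) p)
    (fun p => \sum_(j < n) tensor (a j) (b j) p).
Proof.
move=> NM; pose c i j k := M i j ^+ 2 * (N k i ^+ 2 * b k).
apply: (@tensor_eqv_trans _
  (fun p => \sum_(i < m) \sum_(j < n) \sum_(k < n) tensor (a j) (c i j k) p)).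
  apply: tensor_eqv_sum => i; apply: tensor_eqv_trans (tensor_sum_sum _ _ _ _) _.
  by apply: tensor_eqv_sum => j; apply: tensor_eqv_sum => k; apply: tensor_sq_swap.
apply: (@tensor_eqv_trans _
  (fun p => \sum_(j < n) \sum_(i < m) \sum_(k < n) tensor (a j) (c i j k) p)).
  by apply: tensor_eqv_ext => p; rewrite exchange_big.
apply: tensor_eqv_sum => j; rewrite -(sum_sqr_inverse b j NM).
apply: tensor_eqv_sym; apply: tensor_eqv_trans (tensor_sumr _ _ _) _.
by apply: tensor_eqv_sum => i; apply: tensor_sumr.
Qed.

End TensorRelations.

Section TotallySingularForms.
Variables (F : fieldType) (n : nat).
Implicit Types (q : 'rV[F]_n -> F) (x y : 'rV[F]_n).

Definition erow k : 'rV[F]_n := \row_j (j == k :> nat)%:R.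

Lemma erow_delta (i : 'I_n) : erow i = delta_mx 0 i.
Proof. by apply/rowP => j; rewrite !mxE eqxx. Qed.

Lemma erow_ge k : (n <= k)%N -> erow k = 0.
Proof.
move=> le_nk; apply/rowP => j; rewrite !mxE.
by case: eqP => // jk; move: (ltn_ord j); rewrite jk; lia.
Qed.

Lemma ts_qform_intro q :
  (forall c x, q (c *: x) = c ^+ 2 * q x) -> (forall x y, q (x + y) = q x + q y) ->
  ts_qform q.
Proof.
move=> qZ qD; have polar0 x y : polar q x y = 0.
  by rewrite /polar qD [q x + _]addrC addrK subrr.
by split=> //; split=> //; repeat split; move=> *; rewrite !polar0 ?addr0 ?mulr0.
Qed.

Variable q : 'rV[F]_n -> F.
Hypothesis hq : ts_qform q.

Lemma ts_qformZ c x : q (c *: x) = c ^+ 2 * q x.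
Proof. by case: hq => [[]]. Qed.

Lemma ts_qformD x y : q (x + y) = q x + q y.
Proof. by case: hq. Qed.

Lemma ts_qform0 : q 0 = 0.
Proof. by rewrite -(scale0r 0) ts_qformZ expr0n mul0r. Qed.

Lemma ts_qform_sum (I : Type) (r : seq I) (f : I -> 'rV[F]_n) :
  q (\sum_(i <- r) f i) = \sum_(i <- r) q (f i).
Proof.
elim: r => [|i r IHr]; first by rewrite !big_nil ts_qform0.
by rewrite !big_cons ts_qformD IHr.
Qed.

Lemma ts_qform_expand x : q x = \sum_(i < n) x 0 i ^+ 2 * q (erow i).
Proof.
rewrite {1}(row_sum_delta x) ts_qform_sum.
by apply: eq_bigr => i _; rewrite ts_qformZ erow_delta.
Qed.

End TotallySingularForms.

Arguments erow {F n} k.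

Local Notation form V := (@ssq_q _ V).
Local Notation dual_form V := (@ssq_qd _ V).

Lemma mkseqD (T : Type) (f : nat -> T) m n :
  mkseq f (m + n) = mkseq f m ++ mkseq (fun k => f (m + k)%N) n.
Proof.
rewrite /mkseq iotaD map_cat; congr (_ ++ _).
by rewrite add0n -{1}(addn0 m) iotaDl -map_comp.
Qed.

Section Diagonal.
Variable F : fieldType.
Implicit Types (V W : ssq F) (a b : F) (s : seq (F * F)).

(* [erow k] is both the k-th standard basis vector of V and, through the
   pairing of [isometric], the k-th vector of the dual basis of V^*. *)
Definition diag V : seq (F * F) :=
  mkseq (fun k => (form V (erow k), dual_form V (erow k))) (ssq_dim V).

Lemma valid_osum V W : valid V -> valid W -> valid (osum V W).
Proof.
move=> [qV qdV] [qW qdW]; split; apply: ts_qform_intro => /=.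
- by move=> c x; rewrite !linearZ /= !ts_qformZ // mulrDr.
- by move=> x y; rewrite !linearD /= !ts_qformD // addrACA.
- by move=> c x; rewrite !linearZ /= !ts_qformZ // mulrDr.
- by move=> x y; rewrite !linearD /= !ts_qformD // addrACA.
Qed.

Lemma valid_zero : valid (zero_ssq F).
Proof. by split; apply: ts_qform_intro => *; rewrite ?mulr0 ?addr0. Qed.

Lemma diag_osum V W : valid V -> valid W -> diag (osum V W) = diag V ++ diag W.
Proof.
have lsub_erow m k : lsubmx (erow k : 'rV[F]_(m + ssq_dim W)) = erow k.
  by apply/rowP => j; rewrite !mxE.
have rsub_erow k : rsubmx (erow (ssq_dim V + k) : 'rV[F]_(ssq_dim V + ssq_dim W)) = erow k.
  by apply/rowP => j; rewrite !mxE /= eqn_add2l.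
move=> [qV qdV] [qW qdW]; rewrite /diag /= mkseqD; congr (_ ++ _).
  apply/eq_in_map => k; rewrite mem_iota add0n => /andP[_ lt_k].
  have -> : rsubmx (erow k : 'rV[F]_(ssq_dim V + ssq_dim W)) = 0.
    apply/rowP => j; rewrite !mxE /=.
    by case: eqP => // jk; move: lt_k; rewrite -jk; lia.
  by rewrite !lsub_erow !ts_qform0 // !addr0.
apply: eq_map => k; rewrite !lsub_erow !rsub_erow erow_ge ?leq_addr //.
by rewrite !ts_qform0 // !add0r.
Qed.

Lemma tensor_seq_diag V p :
  tensor_seq (diag V) p =
  \sum_(i < ssq_dim V) tensor (form V (erow i)) (dual_form V (erow i)) p.
Proof.
rewrite tensor_seqE big_map.
rewrite -(big_mkord xpredT (fun i => tensor (form V (erow i)) (dual_form V (erow i)) p)).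
by rewrite /index_iota subn0.
Qed.

Hypothesis hF : 2%N \in [pchar F].

Lemma valid_one_dim a b : valid (one_dim a b).
Proof.
by split; apply: ts_qform_intro => /= [c x|x y];
  rewrite mxE ?sqrD_pchar2 ?mulrDr // exprMn mulrCA.
Qed.

Lemma valid_Phi s : valid (Phi s).
Proof.
elim: s => [|x s IHs]; first exact: valid_zero.
exact: valid_osum (valid_one_dim _ _) IHs.
Qed.

Lemma diag_Phi s : diag (Phi s) = s.
Proof.
elim: s => [|[a b] s IHs] //=.
rewrite (diag_osum (valid_one_dim _ _) (valid_Phi _)) IHs.
by rewrite /diag /= /mkseq /= !mxE /= expr1n !mulr1.
Qed.

End Diagonal.

Lemma row_free_full_inverse (F : fieldType) m n (M : 'M[F]_(m, n)) :
  row_free M -> row_full M -> exists B : 'M_(n, m), B *m M = 1%:M /\ M *m B = 1%:M.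
Proof.
move=> /row_freeP[C CM] /row_fullP[B BM]; exists B; split=> //.
suff -> : B = C by [].
by rewrite -[B]mulmx1 -CM mulmxA BM mul1mx.
Qed.

Lemma row_base_compl_free_full (F : fieldType) n (U : 'M[F]_n) :
  let P := col_mx (row_base U) (row_base U^C%MS) in row_free P /\ row_full P.
Proof.
move=> P; have fullP : row_full P.
  rewrite /row_full /P -addsmxE (adds_eqmx (eq_row_base U) (eq_row_base _)).
  exact: addsmx_compl_full.
split=> //; move: fullP; rewrite /row_free /row_full => /eqP->.
by rewrite mxrank_compl subnKC ?rank_leq_col.
Qed.

Section WittInvariance.
Variable F : fieldType.
Hypothesis hF : 2%N \in [pchar F].
Implicit Types V W : ssq F.

Lemma tensor_diag_change_basis V m (M : 'M[F]_(m, ssq_dim V)) (N : 'M[F]_(ssq_dim V, m)) :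
  valid V -> N *m M = 1%:M ->
  tensor_eqv (tensor_seq (diag V))
    (fun p => \sum_(i < m) tensor (form V (row i M)) (dual_form V (row i N^T)) p).
Proof.
move=> [qV qdV] NM.
have formE i : form V (row i M) = \sum_j M i j ^+ 2 * form V (erow j).
  by rewrite (ts_qform_expand qV); apply: eq_bigr => j _; rewrite mxE.
have dual_formE i : dual_form V (row i N^T) = \sum_k N k i ^+ 2 * dual_form V (erow k).
  by rewrite (ts_qform_expand qdV); apply: eq_bigr => k _; rewrite !mxE.
apply: tensor_eqv_sym; apply: tensor_null_ext (tensor_change_basis hF _ _ NM) => p.
by rewrite tensor_seq_diag; congr (_ - _); apply: eq_bigr => i _; rewrite formE dual_formE.
Qed.

Lemma isometric_tensor_eqv V W : valid V -> isometric V W ->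
  tensor_eqv (tensor_seq (diag V)) (tensor_seq (diag W)).
Proof.
move=> validV [M [freeM fullM formM dual_formM]].
have [B [BM MB]] := row_free_full_inverse freeM fullM.
apply: tensor_eqv_trans (tensor_diag_change_basis validV MB) _.
apply: tensor_eqv_ext => p; rewrite tensor_seq_diag; apply: eq_bigr => i _.
by rewrite -formM -row_mul BM row1 !erow_delta -dual_formM -rowE.
Qed.

Lemma metabolic_tensor_null V : valid V -> metabolic V ->
  tensor_eqv (tensor_seq (diag V)) (fun _ => 0).
Proof.
move=> validV [U [qU qdUo]].
have [freeP fullP] := row_base_compl_free_full U.
set P := col_mx _ _ in freeP fullP.
have [N [NP PN]] := row_free_full_inverse freeP fullP.
apply: tensor_eqv_trans (tensor_diag_change_basis validV NP) _.
apply: tensor_eqv_trans (tensor_eqv_ext (fun p => big_split_ord _ _ _)) _.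
(* P is a basis of U followed by one of a complement, and N^T is its dual basis. *)
have form_U i : form V (row (lshift _ i) P) = 0.
  by rewrite /P rowKu qU // -(eq_row_base U) row_sub.
have dual_form_Uo i : dual_form V (row (rshift (\rank U) i) N^T) = 0.
  apply: qdUo => u; rewrite -(eq_row_base U) => /submxP[D ->].
  rewrite tr_row trmxK colE mulmxA -mulmxA.
  have -> : D *m row_base U = row_mx D 0 *m P by rewrite /P mul_row_col mul0mx addr0.
  by rewrite -mulmxA (mulmxA P) PN mul1mx -colE colKr col0.
apply: (@tensor_eqv_trans _ _
  (fun p => \sum_(i < \rank U) 0 + \sum_(i < \rank U^C%MS) 0)); last first.
  by apply: tensor_eqv_ext => p; rewrite !big1.
apply: tensor_eqvD; apply: tensor_eqv_sum => i.
  by rewrite form_U; apply: tensor0l.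
by rewrite dual_form_Uo; apply: tensor0r.
Qed.

End WittInvariance.

Lemma mkseq_perm_eq (T : eqType) n (f g : nat -> T) :
  perm_eq (mkseq f n) (mkseq g n) -> exists s : 'S_n, forall j : 'I_n, f j = g (s j).
Proof.
move=> /(perm_iotaP (g 0%N))[Is perm_Is fE].
rewrite size_mkseq in perm_Is.
have size_Is : size Is = n by rewrite (perm_size perm_Is) size_iota.
have lt_Is (j : 'I_n) : (nth 0%N Is j < n)%N.
  have lt_j : (j < size Is)%N by rewrite size_Is.
  by have := mem_nth 0%N lt_j; rewrite (perm_mem perm_Is) mem_iota.
pose sg (j : 'I_n) : 'I_n := Ordinal (lt_Is j).
have sg_inj : injective sg.
  move=> j k /(congr1 val) /= /eqP; rewrite nth_uniq ?size_Is //.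
    by move/eqP/val_inj.
  by rewrite (perm_uniq perm_Is) iota_uniq.
exists (perm sg_inj) => j; rewrite permE.
have := congr1 (fun l => nth (g 0%N) l j) fE.
by rewrite /= nth_mkseq // (nth_map 0%N) ?size_Is // nth_mkseq.
Qed.

Section IsometryFromPermutation.
Variable F : fieldType.

Lemma isometric_perm_basis n (q q' r r' : 'rV[F]_n -> F) (s : 'S_n) :
  ts_qform q -> ts_qform q' -> ts_qform r -> ts_qform r' ->
  (forall j : 'I_n, r (erow j) = q (erow (s j)) /\ r' (erow j) = q' (erow (s j))) ->
  isometric (SSQ q q') (SSQ r r').
Proof.
move=> tq tq' tr tr' rE; exists (perm_mx s^-1); split.
- by rewrite row_free_unit unitmx_perm.
- by rewrite row_full_unit unitmx_perm.
- move=> x /=; rewrite -col_permE (ts_qform_expand tr) (ts_qform_expand tq).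
  rewrite [in RHS](reindex_inj (@perm_inj _ s)) /=; apply: eq_bigr => j _.
  by rewrite mxE; case: (rE j) => ->.
- move=> y /=; rewrite tr_perm_mx invgK.
  have -> : y *m perm_mx s = col_perm s^-1 y by rewrite col_permE invgK.
  rewrite (ts_qform_expand tr') (ts_qform_expand tq').
  rewrite [in LHS](reindex_inj (@perm_inj _ s)) /=; apply: eq_bigr => j _.
  by rewrite mxE permK; case: (rE j) => _ ->.
Qed.

Lemma isometric_perm_diag (V W : ssq F) :
  valid V -> valid W -> perm_eq (diag V) (diag W) -> isometric V W.
Proof.
case: V => n q q'; case: W => m r r' [/= tq tq'] [/= tr tr'] pe.
have nm : n = m by have := perm_size pe; rewrite !size_mkseq.
subst m; rewrite perm_sym in pe; have [s sE] := mkseq_perm_eq pe.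
by apply: (isometric_perm_basis (s := s)) => // j; case: (sE j) => -> ->.
Qed.

End IsometryFromPermutation.

Section MetabolicSpaces.
Variable F : fieldType.
Implicit Types (V W : ssq F) (l : seq (F * F)) (a b c x : F) (y : F * F).

Lemma metabolic_zero : metabolic (zero_ssq F).
Proof. by exists 0; split. Qed.

Lemma metabolic_osum V W : metabolic V -> metabolic W -> metabolic (osum V W).
Proof.
move=> [U1 [qU1 qdU1o]] [U2 [qU2 qdU2o]].
have blockE (D1 : 'rV_(ssq_dim V)) (D2 : 'rV_(ssq_dim W)) :
    row_mx (D1 *m U1) (D2 *m U2) = row_mx D1 D2 *m block_mx U1 0 0 U2.
  by rewrite mul_row_block !mulmx0 addr0 add0r.
exists (block_mx U1 0 0 U2); split.
  move=> u /submxP[D ->] /=; rewrite -[D]hsubmxK -blockE row_mxKl row_mxKr.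
  by rewrite qU1 ?qU2 ?submxMl ?addr0.
move=> phi phi_Uo /=.
have phiE (u1 : 'rV_(ssq_dim V)) (u2 : 'rV_(ssq_dim W)) :
    (u1 <= U1)%MS -> (u2 <= U2)%MS ->
    u1 *m (lsubmx phi)^T + u2 *m (rsubmx phi)^T = 0.
  move=> /submxP[D1 ->] /submxP[D2 ->].
  by rewrite -mul_row_col -tr_row_mx hsubmxK phi_Uo // blockE submxMl.
rewrite qdU1o ?qdU2o ?addr0 // => u Uu.
  by have := phiE 0 u (sub0mx _ _) Uu; rewrite mul0mx add0r.
by have := phiE u 0 Uu (sub0mx _ _); rewrite mul0mx addr0.
Qed.

Lemma metabolic_isotropic_line V (v : 'rV_(ssq_dim V)) :
  valid V -> form V v = 0 ->
  (forall phi : 'rV_(ssq_dim V), v *m phi^T = 0 -> dual_form V phi = 0) -> metabolic V.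
Proof.
move=> [qV _] qv0 qd_vo; exists (<<v>>%MS : 'M_(ssq_dim V)); split.
  move=> u; rewrite genmxE => /submxP[D ->].
  by rewrite [D]mx11_scalar mul_scalar_mx ts_qformZ // qv0 mulr0.
by move=> phi phi_vo; apply/qd_vo/phi_vo; rewrite genmxE.
Qed.

Lemma metabolic_hyperplane V (v : 'rV_(ssq_dim V)) :
  (forall u : 'rV_(ssq_dim V), u *m v^T = 0 -> form V u = 0) ->
  (forall phi : 'rV_(ssq_dim V),
     (forall u : 'rV_(ssq_dim V), u *m v^T = 0 -> u *m phi^T = 0) -> dual_form V phi = 0) ->
  metabolic V.
Proof.
move=> q_vo qd_voo; exists (kermx v^T); split.
  by move=> u; rewrite sub_kermx => /eqP; apply: q_vo.
by move=> phi phi_o; apply: qd_voo => u uv0; apply: phi_o; rewrite sub_kermx uv0.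
Qed.

Definition row_of_seq n (l : seq F) : 'rV[F]_n := \row_i nth 0 l i.

Lemma mx11_eq0 (A : 'M[F]_1) : A = 0 <-> A 0 0 = 0.
Proof.
split=> [->|A00]; first by rewrite mxE.
by rewrite [A]mx11_scalar A00; apply/matrixP => i j; rewrite !mxE mul0rn.
Qed.

Lemma mulmx_trE n (u v : 'rV[F]_n) : (u *m v^T) 0 0 = \sum_(i < n) u 0 i * v 0 i.
Proof. by rewrite mxE; apply: eq_bigr => i _; rewrite mxE. Qed.

Hypothesis hF : 2%N \in [pchar F].

Lemma addr_eq0_pchar2 (x y : F) : x + y = 0 -> x = y.
Proof. by move/eqP; rewrite addr_eq0 oppr_pchar2 // => /eqP. Qed.

Lemma form_Phi l (u : 'rV_(ssq_dim (Phi l))) :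
  form (Phi l) u = \sum_(i < ssq_dim (Phi l)) u 0 i ^+ 2 * (nth (0, 0) l i).1.
Proof.
have [qPhi _] := valid_Phi hF l.
rewrite (ts_qform_expand qPhi); apply: eq_bigr => i _.
by have := congr1 (nth (0, 0) ^~ i) (diag_Phi hF l); rewrite /diag nth_mkseq // => <-.
Qed.

Lemma dual_form_Phi l (u : 'rV_(ssq_dim (Phi l))) :
  dual_form (Phi l) u = \sum_(i < ssq_dim (Phi l)) u 0 i ^+ 2 * (nth (0, 0) l i).2.
Proof.
have [_ qdPhi] := valid_Phi hF l.
rewrite (ts_qform_expand qdPhi); apply: eq_bigr => i _.
by have := congr1 (nth (0, 0) ^~ i) (diag_Phi hF l); rewrite /diag nth_mkseq // => <-.
Qed.

Local Ltac expand_Phi :=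
  rewrite ?form_Phi ?dual_form_Phi //= ?mulmx_trE !big_ord_recl !big_ord0 /= ?mxE /=.

Lemma metabolic_Phi_addl a b c : metabolic (Phi [:: (a + b, c); (a, c); (b, c)]).
Proof.
have two0 : (2 : F) = 0 := pcharf0 hF.
apply: (@metabolic_isotropic_line _ (row_of_seq _ [:: 1; 1; 1])); first exact: valid_Phi.
  by expand_Phi; ring: two0.
move=> phi /mx11_eq0; expand_Phi.
rewrite !mul1r addr0 => /addr_eq0_pchar2 ->.
by ring: two0.
Qed.

Lemma metabolic_Phi_addr a b c : metabolic (Phi [:: (a, b + c); (a, b); (a, c)]).
Proof.
have two0 : (2 : F) = 0 := pcharf0 hF.
apply: (@metabolic_hyperplane _ (row_of_seq _ [:: 1; 1; 1])).
  move=> u /mx11_eq0; expand_Phi.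
  rewrite !mulr1 addr0 => /addr_eq0_pchar2 ->.
  by ring: two0.
move=> phi phi_o.
have := phi_o (row_of_seq _ [:: 1; 1; 0]); have := phi_o (row_of_seq _ [:: 1; 0; 1]).
rewrite !mx11_eq0; expand_Phi.
rewrite !(mul1r, mul0r, mulr1, mulr0, addr0, add0r).
move=> /(_ (addrr_pchar2 hF 1)) /addr_eq0_pchar2 <- /(_ (addrr_pchar2 hF 1)) /addr_eq0_pchar2 <-.
by ring: two0.
Qed.

Lemma metabolic_Phi_sq x a b : metabolic (Phi [:: (x ^+ 2 * a, b); (a, x ^+ 2 * b)]).
Proof.
have two0 : (2 : F) = 0 := pcharf0 hF.
apply: (@metabolic_isotropic_line _ (row_of_seq _ [:: 1; x])); first exact: valid_Phi.
  by expand_Phi; ring: two0.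
move=> phi /mx11_eq0; expand_Phi.
rewrite !mul1r addr0 => /addr_eq0_pchar2 ->.
by ring: two0.
Qed.

Lemma metabolic_Phi_dup y : metabolic (Phi [:: y; y]).
Proof.
have two0 : (2 : F) = 0 := pcharf0 hF.
apply: (@metabolic_isotropic_line _ (row_of_seq _ [:: 1; 1])); first exact: valid_Phi.
  by expand_Phi; ring: two0.
move=> phi /mx11_eq0; expand_Phi.
rewrite !mul1r addr0 => /addr_eq0_pchar2 ->.
by ring: two0.
Qed.

Lemma metabolic_Phi_relator (g : fsum F) : tensor_relator g -> metabolic (Phi (map snd g)).
Proof.
case=> [a b c|a b c|x a b] /=.
- exact: metabolic_Phi_addl.
- exact: metabolic_Phi_addr.
- exact: metabolic_Phi_sq.
Qed.

End MetabolicSpaces.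

Definition dup_each (T : Type) (h : seq T) : seq T := flatten [seq [:: x; x] | x <- h].

Lemma count_dup_each (T : Type) (a : pred T) (h : seq T) :
  count a (dup_each h) = (2 * count a h)%N.
Proof. by elim: h => [|x h IHh] //=; rewrite IHh; lia. Qed.

Lemma even_count_perm_dup_each (T : eqType) (w : seq T) :
  (forall p, ~~ odd (count_mem p w)) -> exists h, perm_eq w (dup_each h).
Proof.
elim: {w}(size w) {-2}w (leqnn (size w)) => [|n IHn] [|x w] //= size_w even_w;
  try by exists [::].
have xw : x \in w.
  by have := even_w x; rewrite eqxx /= -has_pred1 has_count; case: (count _ w).
have w_rem := perm_to_rem xw.
have [h remE] : exists h, perm_eq (rem x w) (dup_each h).
  apply: IHn; first by rewrite size_rem //; move: size_w; case: (size w) => //= k; lia.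
  move=> p; have := even_w p; rewrite (seq.permP w_rem) /=.
  by case: (x == p) => //=; rewrite negbK.
by exists (x :: h) => /=; rewrite perm_cons (perm_trans w_rem) // perm_cons.
Qed.

Section WittClasses.
Variable F : fieldType.
Hypothesis hF : 2%N \in [pchar F].
Implicit Types (s t : seq (F * F)) (bs : seq (seq (F * F))) (V : ssq F).

Definition Phi_blocks bs : ssq F := foldr (fun b acc => osum (Phi b) acc) (zero_ssq F) bs.

Lemma valid_Phi_blocks bs : valid (Phi_blocks bs).
Proof.
elim: bs => [|b bs IHbs]; first exact: valid_zero.
exact: valid_osum (valid_Phi hF b) IHbs.
Qed.

Lemma diag_Phi_blocks bs : diag (Phi_blocks bs) = flatten bs.
Proof.
elim: bs => [|b bs IHbs] //=.
by rewrite (diag_osum (valid_Phi hF b) (valid_Phi_blocks bs)) IHbs (diag_Phi hF).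
Qed.

Lemma metabolic_Phi_blocks bs :
  (forall b, b \in bs -> metabolic (Phi b)) -> metabolic (Phi_blocks bs).
Proof.
elim: bs => [|b bs IHbs] meta_bs; first exact: metabolic_zero.
apply: metabolic_osum; first by apply: meta_bs; rewrite mem_head.
by apply: IHbs => b' b'_bs; apply: meta_bs; rewrite inE b'_bs orbT.
Qed.

Lemma tensor_eqv_cat_metabolic s V : valid V -> metabolic V ->
  tensor_eqv (tensor_seq (s ++ diag V)) (tensor_seq s).
Proof.
move=> validV metaV.
have := tensor_eqvD (tensor_eqv_refl (tensor_seq s)) (metabolic_tensor_null hF validV metaV).
by apply: tensor_null_ext => p; rewrite tensor_seq_cat addr0.
Qed.

Lemma witt_equiv_tensor_eqv s t :
  witt_equiv (Phi s) (Phi t) -> tensor_eqv (tensor_seq s) (tensor_seq t).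
Proof.
move=> [mu [mu' [valid_mu valid_mu' meta_mu meta_mu' iso]]].
have := isometric_tensor_eqv hF (valid_osum (valid_Phi hF s) valid_mu) iso.
rewrite (diag_osum (valid_Phi hF s) valid_mu) (diag_osum (valid_Phi hF t) valid_mu').
rewrite !(diag_Phi hF) => st_eqv.
apply: tensor_eqv_trans (tensor_eqv_sym (tensor_eqv_cat_metabolic s valid_mu meta_mu)) _.
exact: tensor_eqv_trans st_eqv (tensor_eqv_cat_metabolic t valid_mu' meta_mu').
Qed.

Lemma intr_pchar2 (z : int) : (z%:~R : F) = (odd `|z|%N)%:R.
Proof.
have natr_odd k : (k%:R : F) = (odd k)%:R by rewrite -(GRing.natr_mod_pchar hF) modn2.
case: z => k /=; first exact: natr_odd.
by rewrite NegzE mulrNz oppr_pchar2 //; apply: natr_odd k.+1.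
Qed.

Lemma fcoef_pm1_pchar2 (g : fsum F) p :
  (forall x, x \in g -> x.1 = 1 \/ x.1 = -1) ->
  ((fcoef g p)%:~R : F) = (count_mem p (map snd g))%:R.
Proof.
elim: g => [|x g IHg] pm1_g; first by rewrite /fcoef big_nil.
have {}IHg := IHg (fun y yg => pm1_g y (@mem_behead _ (x :: g) _ yg)).
rewrite /fcoef big_cons /= -/(fcoef g p); case: (x.2 == p) => /=; last by rewrite IHg.
rewrite intrD IHg natrD.
by case: (pm1_g x (mem_head _ _)) => ->; rewrite intr_pchar2.
Qed.

Lemma tensor_relator_pm1 (g : fsum F) :
  tensor_relator g -> forall x, x \in g -> x.1 = 1 \/ x.1 = -1.
Proof.
case=> [a b c|a b c|x a b] y; rewrite !inE;
  by repeat case/orP; move/eqP->; auto.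
Qed.

Lemma relators_sum_pchar2 (rs : seq (int * fsum F)) p :
  (forall r, r \in rs -> tensor_relator r.2) ->
  \sum_(r <- rs) ((r.1 * fcoef r.2 p)%:~R : F) =
  (count_mem p (flatten [seq map snd r.2 | r <- rs & odd `|r.1|%N]))%:R.
Proof.
elim: rs => [|r rs IHrs] rel_rs; first by rewrite big_nil.
rewrite big_cons IHrs => [|r' r'_rs]; last by apply: rel_rs; rewrite inE r'_rs orbT.
rewrite intrM fcoef_pm1_pchar2; last exact/tensor_relator_pm1/rel_rs/mem_head.
rewrite intr_pchar2 /=; case: (odd _) => /=; last by rewrite mul0r add0r.
by rewrite mul1r count_cat natrD.
Qed.

(* Reducing a relation modulo 2 (through the characteristic-2 field F) leaves
   each pure tensor of s, t and the odd-weighted relators an even number of times. *)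
Lemma tensor_eqv_even_counts s t : tensor_eqv (tensor_seq s) (tensor_seq t) ->
  exists2 bs, (forall b, b \in bs -> metabolic (Phi b)) &
              forall p, ~~ odd (count_mem p (s ++ t ++ flatten bs)).
Proof.
move=> [rs [rel_rs stE]]; have two0 : (2 : F) = 0 := pcharf0 hF.
exists [seq map snd r.2 | r <- rs & odd `|r.1|%N].
  move=> b /mapP[r]; rewrite mem_filter => /andP[_ /rel_rs rel_r] ->.
  exact: metabolic_Phi_relator.
move=> p; have := congr1 (fun z : int => (z%:~R : F)) (stE p).
rewrite /= rmorph_sum relators_sum_pchar2 // /tensor_seq intrB -!pmulrn => E.
rewrite -dvdn2 (dvdn_pcharf hF) !count_cat !natrD -E.
by apply/eqP; ring: two0.
Qed.

Lemma tensor_eqv_witt_equiv s t :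
  tensor_eqv (tensor_seq s) (tensor_seq t) -> witt_equiv (Phi s) (Phi t).
Proof.
move=> /tensor_eqv_even_counts[bs meta_bs even_bs].
have [h hE] := even_count_perm_dup_each even_bs.
have meta_dups (w : seq (F * F)) b : b \in [seq [:: x; x] | x <- w] -> metabolic (Phi b).
  by move=> /mapP[x _ ->]; apply: metabolic_Phi_dup.
exists (Phi_blocks (bs ++ [seq [:: x; x] | x <- t])), (Phi_blocks [seq [:: x; x] | x <- h]).
split; try exact: valid_Phi_blocks.
- by apply: metabolic_Phi_blocks => b; rewrite mem_cat => /orP[/meta_bs|/meta_dups].
- exact/metabolic_Phi_blocks/meta_dups.
apply: isometric_perm_diag; try exact: valid_osum (valid_Phi hF _) (valid_Phi_blocks _).
rewrite (diag_osum (valid_Phi hF s) (valid_Phi_blocks _)).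
rewrite (diag_osum (valid_Phi hF t) (valid_Phi_blocks _)).
rewrite !(diag_Phi hF) !diag_Phi_blocks flatten_cat.
apply/seq.permP => p; have := seq.permP hE p.
rewrite -/(dup_each t) -/(dup_each h) !count_cat !count_dup_each.
(* The counts of s and t occur at two convertible types; [set] merges them for lia. *)
by set cs := count p s; set ct := count p t; set cbs := count p (flatten bs); lia.
Qed.

Lemma witt_equiv_Phi_diag V : valid V -> witt_equiv V (Phi (diag V)).
Proof.
move=> validV; exists (zero_ssq F), (zero_ssq F).
have validPhi := valid_Phi hF (diag V).
split; try exact: valid_zero; try exact: metabolic_zero.
apply: isometric_perm_diag; try exact: valid_osum (valid_zero F).
by rewrite (diag_osum validV (valid_zero F)) (diag_osum validPhi (valid_zero F)) (diag_Phi hF).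
Qed.

End WittClasses.

Unset Implicit Arguments.

Theorem theorem2p2 (F : fieldType) (hF : (2%N) \in [pchar F]) :
  (forall s t : seq (F * F), tens_eq s t <-> witt_equiv (Phi s) (Phi t)) /\
  (forall V : ssq F, valid V -> exists s : seq (F * F), witt_equiv V (Phi s)).
Proof.
split=> [s t|V validV]; last by exists (diag V); apply: witt_equiv_Phi_diag.
rewrite tens_eqE; split; [exact: tensor_eqv_witt_equiv | exact: witt_equiv_tensor_eqv].
Qed.
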